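(* Every cubic (3-regular) graph $G$ of order $6$ (namely the complete bipartite graph $K_{3,3}$ and the triangular prism $K_3\square K_2$) satisfies $\mathcal{C}_f(G)=6$.
   Context: All graphs are finite and simple; $G=(V,E)$, $N(v)$ is the open neighborhood of $v$. A dominating set is $D\subseteq V$ such that every vertex of $V\setminus D$ has a neighbor in $D$. For an integer $k\geq 1$, a $k$-fair dominating set is a dominating set $D$ such that $|N(v)\cap D|=k$ for every $v\in V\setminus D$. A fair dominating set is a $k$-fair dominating set for some integer $k\geq 1$. A fair coalition consists of two disjoint sets $A_1,A_2\subseteq V$, neither of which is a fair dominating set, such that $A_1\cup A_2$ is a fair dominating set. A fair coalition partition ($fc$-partition) of $G$ is a partition $\Upsilon=\{A_1,\dots,A_k\}$ of $V$ such that every $A_i$ is either a singleton fair dominating set of $G$, or is not a fair dominating set and forms a fair coalition with some other non-fair-dominating set $A_j\in\Upsilon$. The fair coalition number $\mathcal{C}_f(G)$ is the maximum number of parts of an $fc$-partition of $G$. *)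

From mathcomp Require Import all_boot all_order.
Set Implicit Arguments. Unset Strict Implicit. Unset Printing Implicit Defensive.

Section FairCoalition.
Variables (T : finType) (e : rel T).

Definition nbhd (v : T) : {set T} := [set u | e v u].

Definition dominating (D : {set T}) : bool :=
  [forall v, (v \notin D) ==> [exists u, (u \in D) && e v u]].

Definition kfair_dominating (k : nat) (D : {set T}) : bool :=
  dominating D && [forall v, (v \notin D) ==> (#|nbhd v :&: D| == k)].

(* fair dominating set: k-fair for some k >= 1 (k <= #|T| w.l.o.g.) *)
Definition fair_dominating (D : {set T}) : bool :=
  [exists k : 'I_#|T|.+1, (1 <= k) && kfair_dominating k D].

Definition fair_coalition (A B : {set T}) : bool :=
  [disjoint A & B] && ~~ fair_dominating A && ~~ fair_dominating B
  && fair_dominating (A :|: B).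

Definition fc_partition (P : {set {set T}}) : bool :=
  partition P [set: T] &&
  [forall A in P,
     (fair_dominating A && (#|A| == 1))
     || (~~ fair_dominating A &&
         [exists B in P, (B != A) && fair_coalition A B])].

Definition fair_coalition_number : nat :=
  \max_(P : {set {set T}} | fc_partition P) #|P|.

End FairCoalition.

Definition simple_graph (T : finType) (e : rel T) : Prop :=
  symmetric e /\ irreflexive e.

Definition cubic (T : finType) (e : rel T) : Prop :=
  forall v : T, #|nbhd e v| = 3.

(* A closed neighbourhood N[x] contains only four of the six vertices, so no
singleton dominates.  On the other hand every vertex x has a neighbour u with
N(x) and N(u) disjoint: otherwise each vertex of N(x) has at most one neighbour
among the two vertices outside N[x], while each of these has at least two
neighbours in N(x), so there would be at most three and at least four edges
between the two sides.  Then N(x) and N(u) partition the six vertices, so {x, u} is a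
1-fair dominating set.  Hence the partition into singletons is an fc-partition,
and no partition has more than six parts. *)
From mathcomp Require Import all_boot all_order.
From mathcomp Require Import zify.
Set Implicit Arguments. Unset Strict Implicit. Unset Printing Implicit Defensive.

Lemma card_partition_le (T : finType) (P : {set {set T}}) (D : {set T}) :
  partition P D -> #|P| <= #|D|.
Proof.
move=> partP; rewrite (card_partition partP) -sum1_card; apply: leq_sum => A AP.
case/and3P: partP => _ _ P_nz; rewrite card_gt0.
by apply: contraNneq P_nz => <-.
Qed.

Lemma partition_set1 (T : finType) : partition [set [set x] | x : T] [set: T].
Proof.
apply/and3P; split.
- apply/eqP/setP => y; rewrite inE; apply/bigcupP.
  by exists [set y]; [apply/imsetP; exists y | rewrite inE].
- apply/trivIsetP => _ _ /imsetP [a _ ->] /imsetP [b _ ->] neq_ab.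
  by rewrite disjoints1 inE; apply: contraNneq neq_ab => ->.
- by apply/imsetP => -[y _ /setP /(_ y)]; rewrite !inE eqxx.
Qed.

Section FairDomination.
Variables (T : finType) (e : rel T).

Lemma in_nbhd v w : (w \in nbhd e v) = e v w.
Proof. by rewrite inE. Qed.

Lemma card_nbhdI v (D : {set T}) : #|nbhd e v :&: D| = \sum_(w in D) e v w.
Proof.
rewrite -sum1_card [LHS]big_mkcond [RHS]big_mkcond; apply: eq_bigr => w _.
by rewrite !inE andbC; case: (w \in D); case: (e v w).
Qed.

Lemma fair_dominating_dominating (D : {set T}) : fair_dominating e D -> dominating e D.
Proof. by case/existsP => k /and3P []. Qed.

Lemma dominating_set1 x w : dominating e [set x] -> w != x -> e w x.
Proof.
move=> /forallP /(_ w) /implyP; rewrite inE => dom_w /dom_w /existsP [u].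
by rewrite inE => /andP [/eqP ->].
Qed.

Lemma fair_dominating_unique_nbr (D : {set T}) : 0 < #|T| ->
  (forall v, v \notin D -> #|nbhd e v :&: D| = 1) -> fair_dominating e D.
Proof.
move=> T_gt0 one_nbr; apply/existsP; exists (inord 1).
rewrite inordK ?ltnS //=; apply/andP; split.
- apply/forallP => v; apply/implyP => /one_nbr card1.
  have /card_gt0P [u] : 0 < #|nbhd e v :&: D| by rewrite card1.
  by rewrite !inE => /andP [evu uD]; apply/existsP; exists u; rewrite uD.
- by apply/forallP => v; apply/implyP => /one_nbr ->.
Qed.

Lemma fc_partition_set1 :
  (forall x, ~~ fair_dominating e [set x]) ->
  (forall x, exists2 u, u != x & fair_dominating e [set x; u]) ->
  fc_partition e [set [set x] | x : T].
Proof.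
move=> not_fd1 has_pair; rewrite /fc_partition partition_set1 /=.
apply/forallP => A; apply/implyP => /imsetP [x _ ->].
rewrite (negbTE (not_fd1 x)) /=; have [u neq_ux fd_xu] := has_pair x.
apply/existsP; exists [set u]; rewrite imset_f //= (inj_eq set1_inj) neq_ux /=.
by rewrite /fair_coalition disjoints1 inE eq_sym neq_ux !not_fd1 fd_xu.
Qed.

Hypothesis e_sym : symmetric e.

Lemma sum_card_nbhdI (A B : {set T}) :
  \sum_(u in A) #|nbhd e u :&: B| = \sum_(v in B) #|nbhd e v :&: A|.
Proof.
under eq_bigr do rewrite card_nbhdI.
rewrite exchange_big; apply: eq_bigr => v _; rewrite card_nbhdI.
by apply: eq_bigr => u _; rewrite e_sym.
Qed.

Lemma fair_dominating_nbhd_partition x u : x != u ->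
  [disjoint nbhd e x & nbhd e u] -> nbhd e x :|: nbhd e u = [set: T] ->
  fair_dominating e [set x; u].
Proof.
move=> neq_xu disj cover; apply: fair_dominating_unique_nbr.
  by apply/card_gt0P; exists x.
move=> w _; rewrite card_nbhdI big_setU1 ?inE //= big_set1 ![e w _]e_sym.
have : w \in nbhd e x :|: nbhd e u by rewrite cover.
rewrite !inE; case: (boolP (e x w)) => [exw _ | _ /= euw].
- have w_Nx : w \in nbhd e x by rewrite in_nbhd.
  by have /negbTE -> : ~~ e u w by rewrite -in_nbhd (disjointFr disj w_Nx).
- by rewrite euw.
Qed.

End FairDomination.

Lemma fair_coalition_number_le (T : finType) (e : rel T) :
  fair_coalition_number e <= #|T|.
Proof.
apply/bigmax_leqP => P /andP [partP _].
by rewrite -cardsT card_partition_le.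
Qed.

Section CubicSix.
Variables (T : finType) (e : rel T).
Hypotheses (e_sym : symmetric e) (e_irr : irreflexive e).
Hypotheses (e_cubic : cubic e) (card_T : #|T| = 6).

Lemma card_closed_nbhd x : #|x |: nbhd e x| = 4.
Proof. by rewrite cardsU1 e_cubic in_nbhd e_irr. Qed.

Lemma cubic6_set1_not_fair x : ~~ fair_dominating e [set x].
Proof.
apply/negP => /fair_dominating_dominating dom.
have /subsetPn [w _] : ~~ ([set: T] \subset x |: nbhd e x).
  rewrite subTset; apply/eqP => full.
  by move: (card_closed_nbhd x); rewrite full cardsT card_T.
rewrite !inE negb_or => /andP [neq_wx /negP]; apply.
by rewrite e_sym (dominating_set1 dom).
Qed.

Section OutsideClosedNbhd.
Variable x : T.
Local Notation S := (nbhd e x).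
Local Notation R := (~: (x |: nbhd e x)).

Lemma card_outside_closed_nbhd : #|R| = 2.
Proof. by apply/eqP; rewrite -(eqn_add2l 4) -{1}(card_closed_nbhd x) cardsC card_T. Qed.

Lemma card_outside_nbhdI r : r \in R -> 2 <= #|nbhd e r :&: S|.
Proof.
move=> rR; have Nr_out : nbhd e r :\: S \subset R :\ r.
  apply/subsetP => w; rewrite !inE negb_or => /andP [xw erw].
  move: rR; rewrite !inE negb_or => /andP [neq_rx xr].
  apply/and3P; split; last exact: xw.
  - by apply: contraTneq erw => ->; rewrite e_irr.
  - by apply: contraNneq xr => eq_wx; rewrite e_sym -eq_wx.
have := subset_leq_card Nr_out; have := cardsID S (nbhd e r); have := cardsD1 r R.
by rewrite e_cubic rR card_outside_closed_nbhd; lia.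
Qed.

Lemma card_inside_nbhdI u s : u \in S -> s \in S -> e u s -> #|nbhd e u :&: R| <= 1.
Proof.
rewrite !in_nbhd => exu exs eus.
have xs_out : [set x; s] \subset nbhd e u :\: R.
  apply/subsetP => w; rewrite !inE negbK => /orP [] /eqP ->.
  - by rewrite eqxx /= e_sym.
  - by rewrite exs orbT.
have := subset_leq_card xs_out; have := cardsID R (nbhd e u).
have neq_xs : x != s by apply: contraTneq exs => <-; rewrite e_irr.
by rewrite e_cubic cards2 neq_xs; lia.
Qed.

End OutsideClosedNbhd.

Lemma cubic6_nbr_disjoint_nbhd x : exists2 u, e x u & [disjoint nbhd e x & nbhd e u].
Proof.
have [u /andP [] | no_u] := pickP [pred u | e x u && [disjoint nbhd e x & nbhd e u]].
  by exists u.
have inside_nbr u : u \in nbhd e x -> exists2 s, s \in nbhd e x & e u s.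
  move=> u_Nx; move: (no_u u); rewrite /= -[e x u]in_nbhd u_Nx /= -setI_eq0 => /negbT.
  by case/set0Pn => s; rewrite inE [s \in nbhd e u]in_nbhd => /andP [s_Nx eus]; exists s.
have le3 : \sum_(u in nbhd e x) #|nbhd e u :&: ~: (x |: nbhd e x)| <= 3.
  rewrite -(e_cubic x) -sum1_card; apply: leq_sum => u u_Nx.
  by have [s s_Nx eus] := inside_nbr u u_Nx; apply: card_inside_nbhdI eus.
have ge4 : 4 <= \sum_(r in ~: (x |: nbhd e x)) #|nbhd e r :&: nbhd e x|.
  rewrite -[4]/(2 * 2) -{1}(card_outside_closed_nbhd x) -sum_nat_const.
  by apply: leq_sum => r; apply: card_outside_nbhdI.
by move: le3; rewrite sum_card_nbhdI // => /(leq_trans ge4).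
Qed.

Lemma cubic6_nbhd_cover x u : [disjoint nbhd e x & nbhd e u] ->
  nbhd e x :|: nbhd e u = [set: T].
Proof.
move=> disj; apply/eqP; rewrite eqEcard subsetT cardsT card_T cardsU.
by rewrite (disjoint_setI0 disj) cards0 !e_cubic.
Qed.

Lemma cubic6_pair_fair x : exists2 u, u != x & fair_dominating e [set x; u].
Proof.
have [u exu disj] := cubic6_nbr_disjoint_nbhd x.
have neq_xu : x != u by apply: contraTneq exu => <-; rewrite e_irr.
exists u; first by rewrite eq_sym.
exact: fair_dominating_nbhd_partition (cubic6_nbhd_cover disj).
Qed.

End CubicSix.

Theorem theorem3p1 (T : finType) (e : rel T) :
  simple_graph e -> cubic e -> #|T| = 6 ->
  fair_coalition_number e = 6.
Proof.
move=> [e_sym e_irr] e_cubic card_T.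
apply/eqP; rewrite eqn_leq -{1}card_T fair_coalition_number_le /=.
have fcP : fc_partition e [set [set x] | x : T].
  apply: fc_partition_set1 => x.
  - exact: cubic6_set1_not_fair.
  - exact: cubic6_pair_fair.
have card_P : #|[set [set x] | x : T]| = 6 by rewrite card_imset ?card_T //; apply: set1_inj.
by rewrite -{1}card_P; apply: leq_bigmax_cond.
Qed.
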